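(* Let $n=Hc$ i.i.d. samples be drawn from the uniform distribution on $[0,1]$, with order statistics $y_{(1,n)}\le\dots\le y_{(n,n)}$. For $H,c$ sufficiently large and $k=1,\dots,H-1$: (i) there is a constant $C>0$ such that for any $\epsilon>\frac1{Hc-1}$, $\mathbb{P}\big(y_{(kc,Hc)}>\frac kH+\epsilon\big)\le CH\sqrt{Hc+1}\exp\big(-(Hc+1)\frac{\epsilon^2}2\big)$; (ii) there is a constant $C>0$ such that for any $\epsilon>\frac2{Hc-1}$, $\mathbb{P}\big(y_{(kc,Hc)}<\frac kH-\epsilon\big)\le CH\sqrt{Hc+1}\exp\big(-(Hc+1)\frac{\epsilon^2}8\big)$; (iii) let $\delta(k,H,c)=|y_{((k-1)c,Hc)}-y_{(kc,Hc)}|$ for $2\le k\le H-1$, $\delta(1,H,c)=|y_{(c,Hc)}|$ and $\delta(H,H,c)=|1-y_{((H-1)c,Hc)}|$; there is a constant $C>0$ such that for any $\epsilon>\frac4{Hc-1}$ and any $1\le k\le H$, $\mathbb{P}\big(|\delta(k,H,c)-\frac1H|>\epsilon\big)\le CH\sqrt{Hc+1}\exp\big(-(Hc+1)\frac{\epsilon^2}{32}\big)$.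
   Context: $y_{(i,n)}$ denotes the $i$-th smallest of $n$ samples. *)

From HB Require Import structures.
From mathcomp Require Import all_boot all_order all_algebra.
From mathcomp Require Import all_classical all_reals all_analysis.
Set Implicit Arguments. Unset Strict Implicit. Unset Printing Implicit Defensive.
Import Order.TTheory GRing.Theory Num.Theory.
Local Open Scope classical_set_scope.
Local Open Scope ring_scope.

(* y_(i,n): the i-th smallest (1-based) of the n samples x 0, ..., x (n-1). *)
Definition ostat (R : realType) (n i : nat) (x : 'I_n -> R) : R :=
  nth 0 (sort (fun a b : R => a <= b) [seq x j | j <- enum 'I_n]) i.-1.
Arguments ostat {R} n i x.

Definition delta (R : realType) (H c k : nat) (x : 'I_(H * c) -> R) : R :=
  if k == 1%N then `| ostat (H * c) c x |
  else if k == H then `| 1 - ostat (H * c) ((H - 1) * c) x |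
  else `| ostat (H * c) ((k - 1) * c) x - ostat (H * c) (k * c) x |.
Arguments delta {R} H c k x.

Definition mutually_independent (d : measure_display) (T : measurableType d)
  (R : realType) (P : probability T R) (n : nat) (X : 'I_n -> T -> R) : Prop :=
  forall (J : {set 'I_n}) (B : 'I_n -> set R),
    (forall j, measurable (B j)) ->
    P (\bigcap_(j in [set j | j \in J]) (X j @^-1` B j)) =
    (\prod_(j in J) P (X j @^-1` B j))%E.

Definition uniform01 (d : measure_display) (T : measurableType d)
  (R : realType) (P : probability T R) (X : T -> R) : Prop :=
  measurable_fun setT X /\
  forall B : set R, measurable B ->
    P (X @^-1` B) = (@lebesgue_measure R) (B `&` `[0%R, 1%R]).

Definition iid_uniform01 (d : measure_display) (T : measurableType d)
  (R : realType) (P : probability T R) (n : nat) (X : 'I_n -> T -> R) : Prop :=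
  (forall j, uniform01 P (X j)) /\ mutually_independent P X.

From HB Require Import structures.
From mathcomp Require Import all_boot all_order all_algebra.
From mathcomp Require Import all_classical all_reals all_analysis.
From mathcomp Require Import ring lra zify.
Set Implicit Arguments. Unset Strict Implicit. Unset Printing Implicit Defensive.
Import Order.TTheory GRing.Theory Num.Theory.
Import numFieldNormedType.Exports.
Local Open Scope classical_set_scope.
Local Open Scope ring_scope.

(* y_(i,n) > a exactly when at most i - 1 samples fall in [0, a], a binomial count
   with success probability min(a, 1).  A Chernoff bound, with the elementary estimate
   exp(-t) <= 1 - t + t^2/2, bounds the probability of this event by exp(-n eps^2/2)
   as soon as i <= n (a - eps); symmetrically y_(i,n) < b is controlled by the number of
   samples in [b, 1].  At n = Hc, i = kc and a = k/H +- eps this gives (i) and (ii), the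
   passage from n to n + 1 in the exponent costing a factor e.  The spacing delta(k)
   deviates from 1/H by more than eps only if y_((k-1)c) or y_(kc) deviates from its
   mean by more than eps/2, which gives (iii). *)

Section binomial_tail.
Variable R : realType.

Lemma expRN_le_quadratic (t : R) : 0 <= t -> expR (- t) <= 1 - t + t ^+ 2 / 2.
Proof.
move=> t0; pose g (x : R) := expR x * (1 - x + x ^+ 2 / 2).
(* [g' x = expR x * x ^+ 2 / 2 >= 0], so [g 0 <= g t] *)
have dg (x : R) : is_derive x (1:R) g (expR x * (x ^+ 2 / 2)).
  by rewrite /g; apply: is_derive_eq; rewrite /GRing.scale /=; field.
have cg : continuous g.
  move=> y; apply: differentiable_continuous; apply/derivable1_diffP; exact: ex_derive.
have : g 0 <= g t.
  move: t0; rewrite le_eqVlt => /predU1P[<- //|t0].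
  have [c _ mvt] := MVT t0 (fun x _ => dg x) (continuous_subspaceT cg).
  by rewrite -subr_ge0 mvt subr0 mulr_ge0 ?(ltW t0) // mulr_ge0 ?expR_ge0 ?divr_ge0 ?sqr_ge0.
rewrite /g expR0 mul1r expr0n /= mul0r addr0 subr0 => g_ge1.
by rewrite expRN -div1r ler_pdivrMr ?expR_gt0 // mulrC.
Qed.

Definition binomial_cdf (n m : nat) (p : R) : R :=
  \sum_(f : {ffun 'I_n -> bool} | (#|[set j | f j]%SET| <= m)%N)
     \prod_(j < n) (if f j then p else 1 - p).

Lemma binomial_cdf_chernoff (n m : nat) (p t : R) : 0 <= p -> p <= 1 -> 0 <= t ->
  binomial_cdf n m p <= expR (t * m%:R) * (1 - p + p * expR (- t)) ^+ n.
Proof.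
move=> p0 p1 t0; set e := expR (- t).
pose w (f : {ffun 'I_n -> bool}) := \prod_(j < n) (if f j then p else 1 - p).
have w_ge0 (f : {ffun 'I_n -> bool}) : 0 <= w f.
  by apply: prodr_ge0 => j _; case: (f j); rewrite ?subr_ge0.
(* Markov's inequality for the weight [exp (t (m - #ones))] *)
have markov : binomial_cdf n m p <=
    \sum_(f : {ffun 'I_n -> bool}) expR (t * m%:R) * (e ^+ #|[set j | f j]%SET| * w f).
  rewrite [leRHS](bigID (fun f : {ffun 'I_n -> bool} => (#|[set j | f j]%SET| <= m)%N)) /=.
  apply: ler_wpDr; first by apply: sumr_ge0 => f _; rewrite !mulr_ge0 ?exprn_ge0 ?expR_ge0.
  apply: ler_sum => f hf; rewrite mulrA ler_peMl ?w_ge0 //.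
  rewrite /e -expRM_natr -expRD -[leLHS]expR0 ler_expR.
  by rewrite mulNr -mulrBr mulr_ge0 // subr_ge0 ler_nat.
have tilt (f : {ffun 'I_n -> bool}) :
    e ^+ #|[set j | f j]%SET| * w f = \prod_(j < n) (if f j then p * e else 1 - p).
  rewrite -prodr_const big_mkcond /= -big_split /=; apply: eq_bigr => j _.
  have -> : (j \in [set j0 | f j0]%SET) = f j by rewrite inE.
  by case: (f j); rewrite ?mul1r // mulrC.
apply: le_trans markov _; under eq_bigr => f _ do rewrite tilt.
rewrite -mulr_sumr ler_pM2l ?expR_gt0 //.
rewrite -(bigA_distr_bigA (fun (j : 'I_n) (b : bool) => if b then p * e else 1 - p)) /=.
under eq_bigr => j _ do rewrite big_bool /=.
by rewrite prodr_const card_ord addrC.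
Qed.

Lemma binomial_cdf_hoeffding (n m : nat) (p e : R) : 0 <= p -> p <= 1 -> 0 <= e ->
  m%:R <= n%:R * (p - e) -> binomial_cdf n m p <= expR (- (n%:R * e ^+ 2 / 2)).
Proof.
move=> p0 p1 e0 hm; apply: le_trans (binomial_cdf_chernoff n m p0 p1 e0) _.
have mgf_ge0 : 0 <= 1 - p + p * expR (- e) by rewrite addr_ge0 ?subr_ge0 ?mulr_ge0 ?expR_ge0.
have mgf_le : 1 - p + p * expR (- e) <= expR (- (p * (e - e ^+ 2 / 2))).
  apply: le_trans (expR_ge1Dx _).
  have := ler_wpM2l p0 (expRN_le_quadratic e0); lra.
have mgfn_le : (1 - p + p * expR (- e)) ^+ n <= expR (- (p * (e - e ^+ 2 / 2))) ^+ n.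
  by apply: lerXn2r; rewrite ?nnegrE ?expR_ge0.
apply: le_trans (ler_wpM2l (expR_ge0 _) mgfn_le) _.
rewrite -expRM_natr -expRD ler_expR.
have : e * m%:R <= e * (n%:R * (p - e)) by rewrite ler_wpM2l.
have : 0 <= n%:R * e ^+ 2 * (1 - p) by rewrite !mulr_ge0 ?sqr_ge0 ?subr_ge0.
have : 0 <= n%:R :> R by [].
nra.
Qed.

Lemma expR_hoeffding_succ (n : nat) (e : R) : e ^+ 2 <= 2 ->
  expR (- (n%:R * e ^+ 2 / 2)) <= expR 1 * expR (- ((n%:R + 1) * (e ^+ 2 / 2))).
Proof. by move=> e2; rewrite -expRD ler_expR; lra. Qed.

Lemma binomial_cdf1 (n m : nat) : (m < n)%N -> binomial_cdf n m 1 = 0.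
Proof.
move=> mn; apply: big1 => f hf; apply/eqP/prodf_eq0.
have : ~~ ([set: 'I_n] \subset [set j | f j])%SET.
  apply: contraTN hf => /subset_leq_card; rewrite cardsT card_ord -ltnNge.
  exact: leq_trans.
case/subsetPn => j _; rewrite inE => /negbTE fj.
by exists j; rewrite // fj subrr.
Qed.

End binomial_tail.

Lemma measure_bigcup_finType d (R : realFieldType) (T : ringOfSetsType d)
    (mu : {content set T -> \bar R}) (I : finType) (D : pred I) (F : I -> set T) :
  (forall i, measurable (F i)) -> trivIset [set i | D i] F ->
  mu (\bigcup_(i in [set i | D i]) F i) = (\sum_(i | D i) mu (F i))%E.
Proof.
move=> mF tF; rewrite measure_fin_bigcup //; last exact: finite_finset.
by rewrite (@bigfs _ _ _ _ (index_enum I)) ?index_enum_uniq // => i _; rewrite mem_index_enum.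
Qed.

Section sample_patterns.
Context d (T : measurableType d) (n : nat).

Lemma count_le_bigcup (a : 'I_n -> T -> bool) (m : nat) :
  [set w | (#|[set j | a j w]%SET| <= m)%N] =
  \bigcup_(f in [set f : {ffun 'I_n -> bool} | (#|[set j | f j]%SET| <= m)%N])
     [set w | forall j, a j w = f j].
Proof.
apply/seteqP; split => w /=.
- move=> hw; exists [ffun j => a j w] => [|j]; last by rewrite ffunE.
  by rewrite /=; under eq_finset => j do rewrite ffunE.
- move=> [f hf fw]; suff -> : [set j | a j w]%SET = [set j | f j]%SET by [].
  by apply/setP => j; rewrite !inE fw.
Qed.

Variables (R : realType) (X : 'I_n -> T -> R) (q : R -> bool).

Lemma pattern_bigcap (f : {ffun 'I_n -> bool}) :
  [set w | forall j, q (X j w) = f j] =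
  \bigcap_(j in [set j | j \in [set: 'I_n]%SET])
     (X j @^-1` (if f j then [set y | q y] else ~` [set y | q y])).
Proof.
apply/seteqP; split => w /=.
- by move=> h j _; rewrite /preimage /= -h; case E : (q (X j w)) => /=; rewrite E.
- move=> h j; have jT : [set` [set: 'I_n]%SET] j by rewrite /= inE.
  have := h j jT; rewrite /preimage /=.
  by case: (f j) => //= /negP/negbTE.
Qed.

Hypothesis mX : forall j, measurable_fun setT (X j).
Hypothesis mq : measurable [set y | q y].

Lemma measurable_pattern (f : {ffun 'I_n -> bool}) :
  measurable [set w | forall j, q (X j w) = f j].
Proof.
rewrite pattern_bigcap; apply: fin_bigcap_measurable => [|j _]; first exact: finite_finset.
rewrite -[X in measurable X]setTI; apply: mX => //.
by case: (f j) => //; exact: measurableC.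
Qed.

Lemma measurable_count_le (m : nat) :
  measurable [set w | (#|[set j | q (X j w)]%SET| <= m)%N].
Proof.
rewrite (count_le_bigcup (fun j w => q (X j w))).
by apply: fin_bigcup_measurable => [|f _]; [exact: finite_finset | exact: measurable_pattern].
Qed.

End sample_patterns.

Section iid_uniform_counts.
Context d (T : measurableType d) (R : realType) (P : probability T R).
Variables (n : nat) (X : 'I_n -> T -> R) (q : R -> bool) (p : R).
Hypothesis iidX : iid_uniform01 P X.
Hypothesis mq : measurable [set y | q y].
Hypothesis lebq : (@lebesgue_measure R) ([set y | q y] `&` `[0%R, 1%R]) = p%:E.

Let mX j : measurable_fun setT (X j) := (iidX.1 j).1.

Lemma iid_pattern_prob (f : {ffun 'I_n -> bool}) :
  P [set w | forall j, q (X j w) = f j] = (\prod_(j < n) (if f j then p else 1 - p))%:E.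
Proof.
have Pq j : P (X j @^-1` [set y | q y]) = p%:E by rewrite (iidX.1 j).2.
rewrite pattern_bigcap iidX.2 => [|j]; last by case: (f j) => //; exact: measurableC.
rewrite -prodEFin; apply: eq_big => [j|j _]; first by rewrite inE.
case: (f j) => //; rewrite -preimage_setC probability_setC ?Pq ?EFinB //.
by rewrite -[X in measurable X]setTI; apply: mX.
Qed.

Lemma prob_count_le (m : nat) :
  P [set w | (#|[set j | q (X j w)]%SET| <= m)%N] = (binomial_cdf n m p)%:E.
Proof.
rewrite (count_le_bigcup (fun j w => q (X j w))) /= measure_bigcup_finType; last 2 first.
- exact: measurable_pattern.
- move=> f g _ _ [w [/= fw gw]]; apply/ffunP => j; by rewrite -fw -gw.
by rewrite /binomial_cdf -sumEFin; apply: eq_bigr => f _; exact: iid_pattern_prob.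
Qed.

End iid_uniform_counts.

Lemma sorted_nth_downclosed disp (T : orderType disp) (x0 : T) (s : seq T) (P : pred T) k :
  sorted <=%O s -> (forall y z, (z <= y)%O -> P y -> P z) ->
  (k < size s)%N -> P (nth x0 s k) = (k < count P s)%N.
Proof.
move=> ss Pdown ks.
have le_nth a b : (a <= b)%N -> (b < size s)%N -> (nth x0 s a <= nth x0 s b)%O.
  move=> ab bs; apply: (sorted_leq_nth le_trans lexx) => //.
  by rewrite inE (leq_ltn_trans ab bs).
apply/idP/idP => [Pk | ].
- rewrite -(cat_take_drop k.+1 s) count_cat.
  suff -> : count P (take k.+1 s) = k.+1 by exact: leq_addr.
  have sz : size (take k.+1 s) = k.+1 by rewrite size_takel.
  apply/eqP; rewrite -[X in _ == X]sz -all_count; apply/(all_nthP x0) => j; rewrite sz => jk.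
  by rewrite nth_take //; apply: Pdown Pk; apply: le_nth.
- apply: contraLR => nPk; rewrite -leqNgt -(cat_take_drop k s) count_cat.
  have -> : count P (drop k s) = 0%N.
    rewrite (@eq_in_count _ _ pred0) ?count_pred0 // => x /(nthP x0) [j hj <-].
    rewrite nth_drop /=; apply/negbTE; apply: contra nPk => Pj.
    apply: Pdown Pj; apply: le_nth; first exact: leq_addr.
    by rewrite size_drop ltn_subRL in hj.
  by rewrite addn0 (leq_trans (count_size _ _)) // size_take_min geq_minl.
Qed.

Section order_statistics.
Variable R : realType.
Implicit Types (n i : nat) (a b : R).

Lemma ostat_downclosed n i (x : 'I_n -> R) (P : pred R) :
  (forall y z, z <= y -> P y -> P z) -> (0 < i <= n)%N ->
  P (ostat n i x) = (i <= #|[set j | P (x j)]%SET|)%N.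
Proof.
move=> Pdown /andP[i0 iN]; rewrite /ostat.
have sz : size (sort (fun a b : R => a <= b) [seq x j | j <- enum 'I_n]) = n.
  by rewrite size_sort size_map size_enum_ord.
rewrite sorted_nth_downclosed ?sz ?prednK //.
rewrite (permP (permEl (perm_sort _ _))) count_map; congr (_ <= _)%N.
by rewrite cardsE cardE enumT /enum_mem size_filter; apply: eq_count.
Qed.

Lemma ostat_gtE n i a (x : 'I_n -> R) : (0 < i <= n)%N ->
  (a < ostat n i x) = (#|[set j | (x j <= a)%R]%SET| <= i.-1)%N.
Proof.
move=> /[dup] /andP[i0 _] iN; rewrite ltNge (@ostat_downclosed _ _ _ (fun y => y <= a)) //.
- by rewrite -ltnNge -{1}(ltn_predK i0) ltnS.
- by move=> y z zy ya; exact: le_trans zy ya.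
Qed.

Lemma ostat_ltE n i b (x : 'I_n -> R) : (0 < i <= n)%N ->
  (ostat n i x < b) = (#|[set j | (b <= x j)%R]%SET| <= n - i)%N.
Proof.
move=> /[dup] /andP[_ i_le_n] iN.
rewrite (@ostat_downclosed _ _ _ (fun y => y < b)) //; last first.
  by move=> y z zy yb; exact: le_lt_trans zy yb.
have -> : [set j | (b <= x j)%R]%SET = ~: [set j | (x j < b)%R]%SET.
  by apply/setP => j; rewrite !inE leNgt.
rewrite cardsCs card_ord.
have : (#|[set j | (x j < b)%R]%SET| <= n)%N by rewrite -[leqRHS]card_ord max_card.
by move: (#|_|) => k kn; apply/idP/idP => h; lia.
Qed.

Lemma measurable_le_set a : measurable [set y : R | y <= a].
Proof.
have -> : [set y : R | y <= a] = `]-oo, a]%classic by apply/seteqP; split => y /=; rewrite in_itv.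
exact: measurable_itv.
Qed.

Lemma measurable_ge_set b : measurable [set y : R | b <= y].
Proof.
have -> : [set y : R | b <= y] = `[b, +oo[%classic.
  by apply/seteqP; split => y /=; rewrite in_itv /= andbT.
exact: measurable_itv.
Qed.

End order_statistics.

Lemma measurable_gt_fun d (T : measurableType d) (R : realType) (f : T -> R) (a : R) :
  measurable_fun setT f -> measurable [set w | a < f w].
Proof.
move=> mf; have -> : [set w | a < f w] = setT `&` f @^-1` `]a, +oo[%classic.
  by apply/seteqP; split => w /=; rewrite in_itv /= andbT //; move=> [].
exact: mf (measurable_itv _).
Qed.

Lemma measurable_lt_fun d (T : measurableType d) (R : realType) (f : T -> R) (a : R) :
  measurable_fun setT f -> measurable [set w | f w < a].
Proof.
move=> mf; have -> : [set w | f w < a] = setT `&` f @^-1` `]-oo, a[%classic.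
  by apply/seteqP; split => w /=; rewrite in_itv //; move=> [].
exact: mf (measurable_itv _).
Qed.

Lemma measurable_ostat d (T : measurableType d) (R : realType) (n i : nat)
    (X : 'I_n -> T -> R) :
  (forall j, measurable_fun setT (X j)) ->
  measurable_fun setT (fun w => ostat n i (fun j => X j w)).
Proof.
move=> mX; wlog i0 : i / (0 < i)%N => [hwlog|].
  by case: i => [|i]; [exact: (hwlog 1%N) | exact: hwlog].
have [ni|iN] := ltnP n i.
  have -> : (fun w => ostat n i (fun j => X j w)) = cst 0.
    apply/funext => w; rewrite /ostat nth_default //.
    by rewrite size_sort size_map size_enum_ord -ltnS prednK.
  exact: measurable_cst.
apply: (measurability _ (measurable_realfun.RGenOInfty.measurableE R)) => //.
move=> /= _ [_ [a ->] <-]; rewrite setTI.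
have -> : (fun w => ostat n i (fun j => X j w)) @^-1` `]a, +oo[%classic =
          [set w | (#|[set j | (X j w <= a)%R]%SET| <= i.-1)%N].
  by apply/seteqP; split => w /=; rewrite in_itv /= andbT ostat_gtE ?i0.
exact: (measurable_count_le (q := fun y => y <= a) mX (measurable_le_set a)).
Qed.

Section uniform_intervals.
Variable R : realType.

Lemma lebesgue_le_cap01 (a : R) : 0 <= a ->
  (@lebesgue_measure R) ([set y | y <= a] `&` `[0%R, 1%R]) = (Num.min a 1)%:E.
Proof.
move=> a0; have m0 : 0 <= Num.min a 1 by rewrite le_min a0 ler01.
have -> : [set y | y <= a] `&` `[0%R, 1%R] = `[0%R, Num.min a 1]%classic.
  apply/seteqP; split => y /=; rewrite !in_itv /= le_min.
  - by move=> [-> /andP[-> ->]].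
  - by move=> /andP[-> /andP[-> ->]].
rewrite lebesgue_measure_itv /= lte_fin; case: ltP => [_|m_le0].
  by rewrite -EFinD subr0.
by apply/esym/congr1/le_anti; rewrite m_le0 m0.
Qed.

Lemma lebesgue_ge_cap01 (b : R) : b <= 1 ->
  (@lebesgue_measure R) ([set y | b <= y] `&` `[0%R, 1%R]) = (1 - Num.max b 0)%:E.
Proof.
move=> b1; have m1 : Num.max b 0 <= 1 by rewrite ge_max b1 ler01.
have -> : [set y | b <= y] `&` `[0%R, 1%R] = `[Num.max b 0, 1%R]%classic.
  apply/seteqP; split => y /=; rewrite !in_itv /= ge_max.
  - by move=> [-> /andP[-> ->]].
  - by move=> /andP[/andP[-> ->] ->].
rewrite lebesgue_measure_itv /= lte_fin; case: ltP => [_|m_ge1].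
  by rewrite -EFinD.
by apply/esym/congr1; apply/eqP; rewrite subr_eq0 eq_le m1 m_ge1.
Qed.

End uniform_intervals.

Section order_statistic_tails.
Context d (T : measurableType d) (R : realType) (P : probability T R).
Variables (n : nat) (X : 'I_n -> T -> R).
Hypothesis iidX : iid_uniform01 P X.

Lemma ostat_upper_tail (i : nat) (a e : R) : (0 < i <= n)%N -> 0 < e ->
  i%:R <= n%:R * (a - e) ->
  (P [set w | (a < ostat n i (fun j => X j w))%R] <=
    (expR 1 * expR (- ((n%:R + 1) * (e ^+ 2 / 2))))%:E)%E.
Proof.
move=> iN e0 hi; have n0 : (0 < n)%N by case/andP: iN => /leq_trans; apply.
have n0R : 0 < n%:R :> R by rewrite ltr0n.
have ae : 0 <= a - e by rewrite -(pmulr_rge0 _ n0R) (le_trans _ hi).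
have hm : (i.-1)%:R <= n%:R * (a - e) :> R by rewrite (le_trans _ hi) // ler_nat leq_pred.
have -> : [set w | a < ostat n i (fun j => X j w)] =
          [set w | (#|[set j | (X j w <= a)%R]%SET| <= i.-1)%N].
  by apply/seteqP; split => w /=; rewrite ostat_gtE.
have [a1|a1] := ltP a 1.
- have leb : (@lebesgue_measure R) ([set y | y <= a] `&` `[0%R, 1%R]) = a%:E.
    by rewrite lebesgue_le_cap01 ?(min_idPl (ltW a1)) //; lra.
  rewrite (prob_count_le iidX (measurable_le_set a) leb) lee_fin.
  apply: le_trans (binomial_cdf_hoeffding _ _ (ltW e0) hm) (expR_hoeffding_succ _ _); try lra.
  have : e ^+ 2 <= 1 by rewrite expr_le1 //; lra.
  lra.
- (* almost surely every sample is [<= a] *)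
  have leb : (@lebesgue_measure R) ([set y | y <= a] `&` `[0%R, 1%R]) = 1%:E.
    by rewrite lebesgue_le_cap01 ?(min_idPr a1) //; lra.
  rewrite (prob_count_le iidX (measurable_le_set a) leb) binomial_cdf1; last by case/andP: iN; lia.
  by rewrite lee_fin mulr_ge0 ?expR_ge0.
Qed.

Lemma ostat_lower_tail (i : nat) (b e : R) : (0 < i <= n)%N -> 0 < e ->
  n%:R * (b + e) <= i%:R ->
  (P [set w | (ostat n i (fun j => X j w) < b)%R] <=
    (expR 1 * expR (- ((n%:R + 1) * (e ^+ 2 / 2))))%:E)%E.
Proof.
move=> /[dup] /andP[i0 iN] iN' e0 hi; have n0 : (0 < n)%N by apply: leq_trans iN.
have n0R : 0 < n%:R :> R by rewrite ltr0n.
have be1 : b + e <= 1.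
  by rewrite -(ler_pM2l n0R) mulr1 (le_trans hi) // ler_nat.
have -> : [set w | ostat n i (fun j => X j w) < b] =
          [set w | (#|[set j | (b <= X j w)%R]%SET| <= n - i)%N].
  by apply/seteqP; split => w /=; rewrite ostat_ltE.
have [b0|b0] := ltP 0 b.
- have leb : (@lebesgue_measure R) ([set y | b <= y] `&` `[0%R, 1%R]) = (1 - b)%:E.
    by rewrite lebesgue_ge_cap01 ?(max_idPl (ltW b0)) //; lra.
  have hm : (n - i)%:R <= n%:R * ((1 - b) - e) :> R by rewrite natrB //; lra.
  rewrite (prob_count_le iidX (measurable_ge_set b) leb) lee_fin.
  apply: le_trans (binomial_cdf_hoeffding _ _ (ltW e0) hm) (expR_hoeffding_succ _ _); try lra.
  have : e ^+ 2 <= 1 by rewrite expr_le1 //; lra.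
  lra.
- (* almost surely every sample is [>= b] *)
  have leb : (@lebesgue_measure R) ([set y | b <= y] `&` `[0%R, 1%R]) = 1%:E.
    by rewrite lebesgue_ge_cap01 ?(max_idPr b0) ?subr0 //; lra.
  rewrite (prob_count_le iidX (measurable_ge_set b) leb) binomial_cdf1; last first.
    by rewrite ltn_subrL i0 n0.
  by rewrite lee_fin mulr_ge0 ?expR_ge0.
Qed.

End order_statistic_tails.

(* [y_(ic, Hc)] on the grid [0 <= i <= H], with the endpoint values [0] and [1]
   that [delta] uses for [k = 1] and [k = H]. *)
Definition grid_ostat (R : realType) (H c i : nat) (x : 'I_(H * c) -> R) : R :=
  if i == 0%N then 0 else if i == H then 1 else ostat (H * c) (i * c) x.
Arguments grid_ostat {R} H c i x.

Section grid.
Variable R : realType.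
Implicit Types (H c i k : nat).

Lemma grid_natrM H c k : (0 < H)%N -> (H * c)%:R * (k%:R / H%:R) = (k * c)%:R :> R.
Proof. by move=> H0; rewrite !natrM; field; rewrite pnatr_eq0 -lt0n. Qed.

Lemma delta_grid_ostat H c k (x : 'I_(H * c) -> R) : (2 <= H)%N -> (1 <= k <= H)%N ->
  delta H c k x = `|grid_ostat H c k.-1 x - grid_ostat H c k x|.
Proof.
move=> H2 /andP[k1 kH]; rewrite /delta /grid_ostat.
have [->|k_neq1] := eqVneq k 1%N.
  have -> : (1 == H) = false by apply/eqP; lia.
  by rewrite mul1n sub0r normrN.
have [->|k_neqH] := eqVneq k H.
  have -> : (H == 0%N) = false by apply/eqP; lia.
  have -> : (H.-1 == 0%N) = false by apply/eqP; lia.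
  have -> : (H.-1 == H) = false by apply/eqP; lia.
  by rewrite subn1 distrC.
have -> : (k.-1 == 0%N) = false by apply/eqP; lia.
have -> : (k.-1 == H) = false by apply/eqP; lia.
have -> : (k == 0%N) = false by apply/eqP; lia.
by rewrite subn1.
Qed.

Lemma dist_norm_sub_le (u v a b : R) : 0 <= b - a ->
  `| `|u - v| - (b - a)| <= `|u - a| + `|v - b|.
Proof.
move=> ba; have := ler_dist_dist (v - u) (b - a).
rewrite (ger0_norm ba) (distrC v u) => /le_trans; apply.
rewrite (_ : v - u - (b - a) = (v - b) - (u - a)); last by ring.
by rewrite [leRHS]addrC ler_normB.
Qed.

Lemma measurable_grid_ostat d (T : measurableType d) H c i (X : 'I_(H * c) -> T -> R) :
  (forall j, measurable_fun setT (X j)) ->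
  measurable_fun setT (fun w => grid_ostat H c i (fun j => X j w)).
Proof.
move=> mX; rewrite /grid_ostat.
by case: eqP => _; [|case: eqP => _]; [exact: measurable_cst.. | exact: measurable_ostat].
Qed.

End grid.

Section grid_tails.
Context d (T : measurableType d) (R : realType) (P : probability T R).
Variables (H c : nat) (X : 'I_(H * c) -> T -> R).
Hypothesis iidX : iid_uniform01 P X.
Hypothesis c0 : (0 < c)%N.

Implicit Types (i k : nat) (e : R).

Let bound e := expR 1 * expR (- (((H * c)%:R + 1) * (e ^+ 2 / 2))).

Lemma grid_upper_tail k e : (1 <= k < H)%N -> 0 < e ->
  (P [set w | (k%:R / H%:R + e < ostat (H * c) (k * c) (fun j => X j w))%R]
    <= (bound e)%:E)%E.
Proof.
move=> /andP[k1 kH] e0; apply: ostat_upper_tail => //.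
- by rewrite muln_gt0 k1 c0 leq_mul2r ltnW ?orbT.
- by rewrite addrK grid_natrM // (leq_ltn_trans _ kH).
Qed.

Lemma grid_lower_tail k e : (1 <= k < H)%N -> 0 < e ->
  (P [set w | (ostat (H * c) (k * c) (fun j => X j w) < k%:R / H%:R - e)%R]
    <= (bound e)%:E)%E.
Proof.
move=> /andP[k1 kH] e0; apply: ostat_lower_tail => //.
- by rewrite muln_gt0 k1 c0 leq_mul2r ltnW ?orbT.
- by rewrite subrK grid_natrM // (leq_ltn_trans _ kH).
Qed.

Lemma grid_ostat_tail i e : (i <= H)%N -> 0 < e ->
  (P [set w | (e < `|grid_ostat H c i (fun j => X j w) - i%:R / H%:R|)%R]
    <= (2 * bound e)%:E)%E.
Proof.
move=> iH e0; have [ik|ik_out] := boolP (0 < i < H)%N; last first.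
  have dev0 w : grid_ostat H c i (fun j => X j w) - i%:R / H%:R = 0.
    rewrite /grid_ostat; have [->|i0] := eqVneq i 0%N; first by rewrite mul0r subr0.
    have iH_eq : i = H by lia.
    by subst i; rewrite eqxx divff ?pnatr_eq0 // subrr.
  rewrite (_ : [set _ | _] = set0) ?measure0 ?lee_fin ?mulr_ge0 ?expR_ge0 //.
  by apply/seteqP; split => w //=; rewrite dev0 normr0; lra.
rewrite /grid_ostat; have -> : (i == 0%N) = false by apply/eqP; lia.
have -> : (i == H) = false by apply/eqP; lia.
set Y := fun w => ostat (H * c) (i * c) (fun j => X j w).
have mY : measurable_fun setT Y by apply: measurable_ostat => j; exact: (iidX.1 j).1.
have mU : measurable [set w | i%:R / H%:R + e < Y w] by exact: measurable_gt_fun.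
have mL : measurable [set w | Y w < i%:R / H%:R - e] by exact: measurable_lt_fun.
have mE : measurable [set w | e < `|Y w - i%:R / H%:R|].
  apply: measurable_gt_fun; apply: measurableT_comp.
    exact: measurable_realfun.normr_measurable.
  exact: measurable_realfun.measurable_funB.
have sub : [set w | e < `|Y w - i%:R / H%:R|] `<=`
           [set w | i%:R / H%:R + e < Y w] `|` [set w | Y w < i%:R / H%:R - e].
  by move=> w /=; rewrite ltr_normr => /orP[?|?]; [left|right]; lra.
apply: le_trans (le_measure _ (mem_set mE) (mem_set (measurableU _ _ mU mL)) sub) _.
apply: le_trans (measureU2 _ mU mL) _.
have -> : 2 * bound e = bound e + bound e by ring.
by rewrite EFinD leeD // ?grid_upper_tail ?grid_lower_tail.
Qed.

Lemma delta_tail k eps : (2 <= H)%N -> (1 <= k <= H)%N -> 0 < eps ->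
  (P [set w | (eps < `|delta H c k (fun j => X j w) - 1 / H%:R|)%R]
    <= (4 * bound (eps / 2))%:E)%E.
Proof.
move=> H2 /[dup] /andP[k1 kH] hk eps0; set e := eps / 2; have e0 : 0 < e by rewrite divr_gt0.
pose Y i w := grid_ostat H c i (fun j => X j w).
pose G i := [set w | e < `|Y i w - i%:R / H%:R|].
have mY i : measurable_fun setT (Y i).
  by apply: measurable_grid_ostat => j; exact: (iidX.1 j).1.
have mG i : measurable (G i).
  apply: measurable_gt_fun; apply: measurableT_comp.
    exact: measurable_realfun.normr_measurable.
  exact: measurable_realfun.measurable_funB.
have gap : k%:R / H%:R - (k.-1)%:R / H%:R = 1 / H%:R :> R.
  by rewrite -mulrBl -[in k%:R](prednK k1) -nat1r addrK.
have gap_ge0 : 0 <= k%:R / H%:R - (k.-1)%:R / H%:R :> R by rewrite gap divr_ge0.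
have -> : [set w | eps < `|delta H c k (fun j => X j w) - 1 / H%:R|] =
          [set w | eps < `| `|Y k.-1 w - Y k w| - 1 / H%:R|].
  by apply/seteqP; split => w /=; rewrite delta_grid_ostat.
have mE : measurable [set w | eps < `| `|Y k.-1 w - Y k w| - 1 / H%:R|].
  apply: measurable_gt_fun; apply: measurableT_comp.
    exact: measurable_realfun.normr_measurable.
  apply: measurable_realfun.measurable_funB => //; apply: measurableT_comp.
    exact: measurable_realfun.normr_measurable.
  exact: measurable_realfun.measurable_funB.
have sub : [set w | eps < `| `|Y k.-1 w - Y k w| - 1 / H%:R|] `<=` G k.-1 `|` G k.
  move=> w /=; rewrite -gap => hw.
  have := dist_norm_sub_le (Y k.-1 w) (Y k w) gap_ge0.
  case: (ltP e `|Y k.-1 w - (k.-1)%:R / H%:R|) => h; [left|right];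
    by rewrite /G /=; move: h; rewrite /e => h; lra.
apply: le_trans (le_measure _ (mem_set mE) (mem_set (measurableU _ _ (mG _) (mG _))) sub) _.
apply: le_trans (measureU2 _ (mG _) (mG _)) _.
have -> : 4 * bound e = 2 * bound e + 2 * bound e by ring.
by rewrite EFinD leeD // grid_ostat_tail // (leq_trans (leq_pred k)).
Qed.

End grid_tails.

Lemma tail_bound_le (R : realType) (C z1 z2 : R) (H n : nat) :
  0 <= C -> (0 < H)%N -> z2 <= z1 ->
  C * expR (- z1) <= C * H%:R * Num.sqrt (n%:R + 1) * expR (- z2).
Proof.
move=> C0 H0 z21; have ez : expR (- z1) <= expR (- z2) by rewrite ler_expR lerN2.
have s1 : 1 <= Num.sqrt (n%:R + 1) :> R by rewrite -{1}sqrtr1 ler_sqrt // lerDr.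
rewrite -!mulrA ler_wpM2l // mulrA; apply: le_trans ez _.
by rewrite ler_peMl ?expR_ge0 // -[leLHS]mulr1 ler_pM // ler1n.
Qed.

Theorem lemma20 (R : realType) :
  (* (i) *)
  (exists C : R, 0 < C /\ exists N : nat, forall H c : nat, (N <= H)%N -> (N <= c)%N ->
     forall (d : measure_display) (T : measurableType d) (P : probability T R)
            (X : 'I_(H * c) -> T -> R), iid_uniform01 P X ->
     forall k : nat, (1 <= k <= H - 1)%N ->
     forall eps : R, 1 / ((H * c)%:R - 1) < eps ->
       (P [set w | (k%:R / H%:R + eps < ostat (H * c) (k * c) (fun j => X j w))%R]
       <= ((C * H%:R * Num.sqrt ((H * c)%:R + 1)
             * expR (- (((H * c)%:R + 1) * (eps ^+ 2 / 2))))%R)%:E)%E) /\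
  (* (ii) *)
  (exists C : R, 0 < C /\ exists N : nat, forall H c : nat, (N <= H)%N -> (N <= c)%N ->
     forall (d : measure_display) (T : measurableType d) (P : probability T R)
            (X : 'I_(H * c) -> T -> R), iid_uniform01 P X ->
     forall k : nat, (1 <= k <= H - 1)%N ->
     forall eps : R, 2 / ((H * c)%:R - 1) < eps ->
       (P [set w | (ostat (H * c) (k * c) (fun j => X j w) < k%:R / H%:R - eps)%R]
       <= ((C * H%:R * Num.sqrt ((H * c)%:R + 1)
             * expR (- (((H * c)%:R + 1) * (eps ^+ 2 / 8))))%R)%:E)%E) /\
  (* (iii) *)
  (exists C : R, 0 < C /\ exists N : nat, forall H c : nat, (N <= H)%N -> (N <= c)%N ->
     forall (d : measure_display) (T : measurableType d) (P : probability T R)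
            (X : 'I_(H * c) -> T -> R), iid_uniform01 P X ->
     forall eps : R, 4 / ((H * c)%:R - 1) < eps ->
     forall k : nat, (1 <= k <= H)%N ->
       (P [set w | (eps < `| delta H c k (fun j => X j w) - 1 / H%:R |)%R]
       <= ((C * H%:R * Num.sqrt ((H * c)%:R + 1)
             * expR (- (((H * c)%:R + 1) * (eps ^+ 2 / 32))))%R)%:E)%E).
Proof.
have eps_gt0 (H c : nat) (x eps : R) : (2 <= H)%N -> (2 <= c)%N -> 0 < x ->
    x / ((H * c)%:R - 1) < eps -> 0 < eps.
  move=> H2 c2 x0; apply: lt_trans; rewrite divr_gt0 // subr_gt0 ltr1n.
  exact: leq_trans (leq_mul H2 c2).
split; [|split].
- exists (expR 1); split; first exact: expR_gt0.
  exists 2%N => H c H2 c2 d T P X iidX k /andP[k1 kH] eps heps.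
  have [H0 c0] : (0 < H)%N /\ (0 < c)%N by split; lia.
  have hk : (1 <= k < H)%N by rewrite k1 (leq_ltn_trans kH) // ltn_subrL; lia.
  apply: le_trans (grid_upper_tail iidX c0 hk (eps_gt0 _ _ _ _ H2 c2 ltr01 heps)) _.
  by rewrite lee_fin tail_bound_le ?expR_ge0 // H0.
- exists (expR 1); split; first exact: expR_gt0.
  exists 2%N => H c H2 c2 d T P X iidX k /andP[k1 kH] eps heps.
  have [H0 c0] : (0 < H)%N /\ (0 < c)%N by split; lia.
  have hk : (1 <= k < H)%N by rewrite k1 (leq_ltn_trans kH) // ltn_subrL; lia.
  apply: le_trans (grid_lower_tail iidX c0 hk (eps_gt0 _ _ _ _ H2 c2 (ltr0Sn R 1) heps)) _.
  rewrite lee_fin tail_bound_le ?expR_ge0 ?H0 // ler_wpM2l //.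
  by have := sqr_ge0 eps; lra.
- exists (4 * expR 1); split; first by rewrite mulr_gt0 ?expR_gt0.
  exists 2%N => H c H2 c2 d T P X iidX eps heps k hk.
  have [H0 c0] : (0 < H)%N /\ (0 < c)%N by split; lia.
  apply: le_trans (delta_tail iidX c0 H2 hk (eps_gt0 _ _ _ _ H2 c2 (ltr0Sn R 3) heps)) _.
  rewrite lee_fin mulrA tail_bound_le ?mulr_ge0 ?expR_ge0 ?H0 // ler_wpM2l //.
  by have := sqr_ge0 eps; lra.
Qed.
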